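(* Let $X=(V,E,T)$ be an $(s,k,K)$-two layer system with weight function $w$. Let $A\subseteq E$ and $U\subseteq V$, and for $0\le i\le k$ let $A^i_U=\{\tau\in A:|U\cap\tau|=i\}$. Then $$\sum_{i=1}^k i\,w(A^i_U)\le\sum_{v\in U}m_v(A_v)\le (s-1)\sum_{i=1}^k i\,w(A^i_U).$$ In particular, for every $A\subseteq E$ and every $U\subseteq V$, $\sum_{v\in U}m_v(A_v)\le (s-1)k\,w(A)$.
   Context: Let $s,k,K$ be positive integers. An $(s,k,K)$-two layer system is a triple $X=(V,E,T)$ where: $V$ is a finite set; $E\subseteq 2^V$ with $|\tau|=k$ for every $\tau\in E$ and $\bigcup_{\tau\in E}\tau=V$; $T\subseteq 2^E$ with $|\sigma|=K$ for every $\sigma\in T$ and $\bigcup_{\sigma\in T}\sigma=E$. For $v\in V$, $\sigma\in T$ write $v\in\sigma$ if $v\in\tau$ for some $\tau\in\sigma$; it is required that $2\le|\{\tau\in\sigma:v\in\tau\}|\le s$ for all $\sigma\in T$, $v\in\sigma$. A positive function $w:T\to\mathbb{R}_{>0}$ is fixed and extended by $w(\tau)=\sum_{\sigma\in T,\tau\in\sigma}w(\sigma)$ ($\tau\in E$), $w(v)=\sum_{\sigma\in T,v\in\sigma}w(\sigma)$ ($v\in V$), $w(B)=\sum_{\eta\in B}w(\eta)$. For $v\in V$ let $E_v=\{\tau\in E:v\in\tau\}$. The link of $v$ is the graph with vertex set $E_v$ in which distinct $\tau_1,\tau_2\in E_v$ are adjacent iff some $\sigma\in T$ contains both, with edge weight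 $m_v(\{\tau_1,\tau_2\})=\sum_{\sigma\in T,\ \tau_1,\tau_2\in\sigma}w(\sigma)$; for $\tau\in E_v$, $m_v(\tau)$ is the sum of $m_v$ over the link edges containing $\tau$, and $m_v(B)=\sum_{\tau\in B}m_v(\tau)$ for $B\subseteq E_v$. For $A\subseteq E$, $A_v=A\cap E_v$. *)

From mathcomp Require Import all_boot all_order all_algebra.
Set Implicit Arguments. Unset Strict Implicit. Unset Printing Implicit Defensive.
Import Order.TTheory GRing.Theory Num.Theory.
Local Open Scope ring_scope.

Section TwoLayer.
Variables (V : finType) (R : realFieldType).

(* v \in sigma : v lies in some tau in sigma *)
Definition vin (v : V) (sigma : {set {set V}}) : bool :=
  [exists tau in sigma, v \in tau].

(* (s,k,K)-two layer system X = (V,E,T); V is the whole finite type V *)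
Definition two_layer (s k K : nat) (E : {set {set V}})
    (T : {set {set {set V}}}) : Prop :=
  [/\ (forall tau, tau \in E -> #|tau| = k),
      \bigcup_(tau in E) tau = [set: V],
      (forall sigma, sigma \in T -> #|sigma| = K),
      \bigcup_(sigma in T) sigma = E &
      (forall sigma v, sigma \in T -> vin v sigma ->
         (2 <= #|[set tau in sigma | v \in tau]| <= s)%N)].

Variables (T : {set {set {set V}}}) (w : {set {set V}} -> R).

Definition wE (tau : {set V}) : R := \sum_(sigma in T | tau \in sigma) w sigma.
Definition wset (B : {set {set V}}) : R := \sum_(tau in B) wE tau.

Definition Ev (E : {set {set V}}) (v : V) : {set {set V}} :=
  [set tau in E | v \in tau].

Definition mvedge (t1 t2 : {set V}) : R :=
  \sum_(sigma in T | (t1 \in sigma) && (t2 \in sigma)) w sigma.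

(* adjacency in the link of v (vertices are E_v) *)
Definition link_adj (t1 t2 : {set V}) : bool :=
  (t1 != t2) && [exists sigma in T, (t1 \in sigma) && (t2 \in sigma)].

Definition mv (E : {set {set V}}) (v : V) (tau : {set V}) : R :=
  \sum_(t in Ev E v | link_adj tau t) mvedge tau t.

Definition mvset (E : {set {set V}}) (v : V) (B : {set {set V}}) : R :=
  \sum_(tau in B) mv E v tau.

End TwoLayer.

Definition AiU (V : finType) (A : {set {set V}}) (U : {set V}) (i : nat) :=
  [set tau in A | #|U :&: tau| == i].

(* Both bounds hold edge by edge.  For [v \in tau], each [sigma \in T]
   containing [tau] contributes [w sigma] to [m_v(tau)] once for every other
   edge of [sigma] through [v], so [m_v(tau)] is the sum over such [sigma] of
   [w(sigma) (n_v(sigma) - 1)] with [2 <= n_v(sigma) <= s]; hence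
   [w(tau) <= m_v(tau) <= (s-1) w(tau)].  Summing over the pairs [(v, tau)]
   with [v \in U :&: tau] counts each [tau] exactly [#|U :&: tau|] times,
   which is the layered sum [sum_i i w(A^i_U)]. *)
From mathcomp Require Import all_boot all_order all_algebra.
Set Implicit Arguments. Unset Strict Implicit. Unset Printing Implicit Defensive.
Import Order.TTheory GRing.Theory Num.Theory.
Local Open Scope ring_scope.

Section DoubleCounting.
Variables (V : finType) (R : realFieldType).
Implicit Types (A : {set {set V}}) (U : {set V}) (F : {set V} -> R).

Lemma sum_card_setI_mul A U F :
  \sum_(tau in A) #|U :&: tau|%:R * F tau
  = \sum_(v in U) \sum_(tau in A | v \in tau) F tau.
Proof.
under [RHS]eq_bigr => v _ do rewrite big_mkcondr /=.
rewrite exchange_big; apply: eq_bigr => tau _.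
rewrite -big_mkcondr /= (eq_bigl (mem (U :&: tau))) => [|v]; last by rewrite !inE.
by rewrite sumr_const mulr_natl.
Qed.

Lemma sum_layers_AiU k A U F :
  {in A, forall tau, #|U :&: tau| <= k}%N ->
  \sum_(1 <= i < k.+1) i%:R * (\sum_(tau in AiU A U i) F tau)
  = \sum_(tau in A) #|U :&: tau|%:R * F tau.
Proof.
move=> cardUA.
under eq_bigr => i _ do rewrite mulr_sumr big_mkcond /=.
rewrite exchange_big [RHS]big_mkcond; apply: eq_bigr => tau _.
have [tA|tNA] := boolP (tau \in A); last first.
  by rewrite big1 // => i _; rewrite inE (negbTE tNA).
under eq_bigr => i _ do rewrite inE tA /=.
have := cardUA tau tA; set n := #|U :&: tau| => le_nk.
have [->|n_gt0] := posnP n.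
  by rewrite mul0r big1_seq // => -[|i] //= _; rewrite mul0r.
rewrite (bigD1_seq n) ?iota_uniq ?mem_index_iota ?n_gt0 ?ltnS //= eqxx.
by rewrite big1 ?addr0 // => i ni; rewrite eq_sym (negbTE ni).
Qed.

Lemma sum_card_setI_mul_le k A U F :
  (forall tau, 0 <= F tau) -> {in A, forall tau, #|U :&: tau| <= k}%N ->
  \sum_(tau in A) #|U :&: tau|%:R * F tau <= k%:R * \sum_(tau in A) F tau.
Proof.
move=> F_ge0 cardUA; rewrite mulr_sumr; apply: ler_sum => tau tA.
by rewrite ler_wpM2r // ler_nat cardUA.
Qed.

End DoubleCounting.

Lemma vin_of_mem (V : finType) (v : V) (tau : {set V}) (sigma : {set {set V}}) :
  tau \in sigma -> v \in tau -> vin v sigma.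
Proof. by move=> tau_s v_tau; apply/existsP; exists tau; rewrite tau_s. Qed.

Section LinkWeight.
Variables (V : finType) (R : realFieldType).
Variables (E : {set {set V}}) (T : {set {set {set V}}}) (w : {set {set V}} -> R).
Implicit Types (v : V) (tau : {set V}) (sigma : {set {set V}}).
Implicit Types (A : {set {set V}}) (U : {set V}).
Hypothesis subET : \bigcup_(sigma in T) sigma \subset E.

Lemma mvE v tau : v \in tau ->
  mv T w E v tau
  = \sum_(sigma in T | tau \in sigma) w sigma * (#|[set t in sigma | v \in t]| - 1)%:R.
Proof.
move=> v_tau.
have mvedgeE t : mvedge T w tau t
    = \sum_(sigma in T | tau \in sigma) (if t \in sigma then w sigma else 0).
  by rewrite /mvedge -big_mkcondr; apply: eq_bigl => sigma; rewrite andbA.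
transitivity (\sum_(t in Ev E v | t != tau) \sum_(sigma in T | tau \in sigma)
                (if t \in sigma then w sigma else 0)).
  rewrite /mv big_mkcond [RHS]big_mkcond; apply: eq_bigr => t _.
  rewrite mvedgeE /link_adj eq_sym.
  case: (t \in Ev E v) (t != tau) => [] [] //=; case: existsP => [_|noT] //.
  rewrite big1 // => sigma /andP[sT t_s]; case: ifP => // s_t.
  by case: noT; exists sigma; rewrite sT t_s s_t.
rewrite exchange_big; apply: eq_bigr => sigma /andP[sT tau_s].
rewrite -big_mkcondr (eq_bigl (mem ([set t in sigma | v \in t] :\ tau))) => [|t].
  rewrite sumr_const mulr_natr [in RHS](cardsD1 tau) !inE tau_s v_tau.
  by rewrite add1n subn1.
rewrite /= !inE; case t_s: (t \in sigma); rewrite ?andbF //= andbT andbC.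
by rewrite (subsetP subET) //; apply/bigcupP; exists sigma.
Qed.

Hypothesis w_ge0 : {in T, forall sigma, 0 <= w sigma}.

Lemma wE_le_mv v tau :
  (forall sigma, sigma \in T -> vin v sigma -> 2 <= #|[set t in sigma | v \in t]|)%N ->
  v \in tau -> wE T w tau <= mv T w E v tau.
Proof.
move=> two_le v_tau; rewrite mvE // /wE; apply: ler_sum => sigma /andP[sT tau_s].
have two_le_n := two_le sigma sT (vin_of_mem tau_s v_tau).
by rewrite -[leLHS]mulr1 ler_wpM2l ?w_ge0 // ler1n subn_gt0.
Qed.

Lemma mv_le_wE s v tau :
  (forall sigma, sigma \in T -> vin v sigma -> #|[set t in sigma | v \in t]| <= s)%N ->
  v \in tau -> mv T w E v tau <= (s - 1)%:R * wE T w tau.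
Proof.
move=> le_s v_tau; rewrite mvE // /wE mulr_sumr; apply: ler_sum => sigma /andP[sT tau_s].
have n_le_s := le_s sigma sT (vin_of_mem tau_s v_tau).
by rewrite [leRHS]mulrC ler_wpM2l ?w_ge0 // ler_nat leq_sub2r.
Qed.

Lemma wE_ge0 tau : 0 <= wE T w tau.
Proof. by apply: sumr_ge0 => sigma /andP[sT _]; apply: w_ge0. Qed.

Lemma sum_mvset_setI A U : A \subset E ->
  \sum_(v in U) mvset T w E v (A :&: Ev E v)
  = \sum_(v in U) \sum_(tau in A | v \in tau) mv T w E v tau.
Proof.
move=> subAE; apply: eq_bigr => v _; apply: eq_bigl => tau.
by rewrite !inE; case: (boolP (tau \in A)) => //= /(subsetP subAE) ->.
Qed.

End LinkWeight.

Theorem proposition2p9 (V : finType) (R : realFieldType) (s k K : nat)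
    (E : {set {set V}}) (T : {set {set {set V}}}) (w : {set {set V}} -> R) :
  (0 < s)%N -> (0 < k)%N -> (0 < K)%N ->
  two_layer s k K E T ->
  (forall sigma, sigma \in T -> 0 < w sigma) ->
  forall (A : {set {set V}}) (U : {set V}), A \subset E ->
  [/\ \sum_(1 <= i < k.+1) i%:R * wset T w (AiU A U i)
        <= \sum_(v in U) mvset T w E v (A :&: Ev E v),
      \sum_(v in U) mvset T w E v (A :&: Ev E v)
        <= (s - 1)%:R * \sum_(1 <= i < k.+1) i%:R * wset T w (AiU A U i) &
      \sum_(v in U) mvset T w E v (A :&: Ev E v)
        <= (s - 1)%:R * k%:R * wset T w A].
Proof.
move=> _ _ _ [cardE _ _ coverT bounds] w_gt0 A U subAE.
have subET : \bigcup_(sigma in T) sigma \subset E by rewrite coverT.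
have w_ge0 : {in T, forall sigma, 0 <= w sigma} by move=> sigma /w_gt0/ltW.
have cardUA : {in A, forall tau, #|U :&: tau| <= k}%N.
  by move=> tau /(subsetP subAE) tE; rewrite -(cardE tau tE) subset_leq_card ?subsetIr.
rewrite /wset sum_layers_AiU // sum_mvset_setI // sum_card_setI_mul.
have upper : \sum_(v in U) \sum_(tau in A | v \in tau) mv T w E v tau
    <= (s - 1)%:R * \sum_(v in U) \sum_(tau in A | v \in tau) wE T w tau.
  rewrite mulr_sumr; apply: ler_sum => v _; rewrite mulr_sumr.
  apply: ler_sum => tau /andP[_ v_tau]; apply: mv_le_wE v_tau => //.
  by move=> sigma sT /(bounds _ _ sT)/andP[].
split => //.
- apply: ler_sum => v _; apply: ler_sum => tau /andP[_ v_tau].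
  by apply: wE_le_mv v_tau => // sigma sT /(bounds _ _ sT)/andP[].
- apply: (le_trans upper); rewrite -mulrA ler_wpM2l // -sum_card_setI_mul.
  exact: sum_card_setI_mul_le (wE_ge0 w_ge0) cardUA.
Qed.
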